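(* Let $n\geq1$, $J=\{[1,2],[3,4],\ldots,[2n-1,2n]\}$, and $A\in{\cal M}_{2n}$. Let $C_1,\ldots,C_t$ be the connected components of the spanning subgraph of $K_{2n}$ with edge set $J\cup A$, with $C_t$ containing the edge $[2n-1,2n]$. Let $2\mu_i$ be the number of vertices of $C_i$, so that $\{2\mu_1,\ldots,2\mu_t\}$ is the multiset of parts of $d(J,A)$. (i) Let $s$ be a vertex of $C_j$ for some $j\in\{1,\ldots,t-1\}$, and put $A'=(s,2n-1)\cdot A$. Then the multiset of parts of $d(A',J)$ is $(\{2\mu_1,\ldots,2\mu_t\}\setminus\{2\mu_j,2\mu_t\})\cup\{2(\mu_j+\mu_t)\}$, and $2(\mu_j+\mu_t)$ is the number of vertices of the component of $A'\cup J$ containing $[2n-1,2n]$. (ii) Traverse the vertices of the alternating cycle $C_t$ in cyclic order, starting at $2n$ and going next to $2n-1$, and list them as $2n,2n-1,i_1,i_2,\ldots,i_{2k-1},i_{2k}$, where $k\geq0$ and $2\mu_t=2k+2$. Let $j\in\{1,\ldots,k\}$. (a) If $A'=(i_{2j},2n-1)\cdot A$, then the multiset of parts of $d(A',J)$ is $\{2\mu_1,\ldots,2\mu_{t-1},2\mu_t-2j,2j\}$, and $2\mu_t-2j$ is the number of vertices of the component of $A'\cup J$ containing $[2n-1,2n]$. (b) If $A'=(i_{2j-1},2n-1)\cdot A$, then the multiset of parts of $d(A',J)$ is $\{2\mu_1,\ldots,2\mu_t\}$, and $2\mu_t$ is the number of vertices of the component of $A'\cup J$ containing $[2n-1,2n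]$.
   Context: $K_{2n}$ is the complete graph on $\{1,\ldots,2n\}$, $[i,j]$ denotes the edge joining $i$ and $j$, and ${\cal M}_{2n}$ is the set of perfect matchings of $K_{2n}$. For $A,B\in{\cal M}_{2n}$, $d(A,B)$ is the partition of $2n$ whose parts are the numbers of vertices of the connected components of the spanning subgraph with edge set $A\cup B$. The components of $J\cup A$ are alternating cycles, or single edges common to $J$ and $A$. A permutation $\sigma\in S_{2n}$ acts on matchings by relabelling vertices: $\sigma\cdot A=\{[\sigma(a),\sigma(b)]:[a,b]\in A\}$. $(s,2n-1)$ denotes the transposition of $s$ and $2n-1$. *)

(* Vertex k+1 of K_{2n} is represented by (k : 'I_(2*n)). *)
From mathcomp Require Import all_boot fingroup perm.
Set Implicit Arguments. Unset Strict Implicit. Unset Printing Implicit Defensive.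

Section Matchings.
Variable T : finType.

Definition is_pm (A : {set {set T}}) : bool :=
  [forall e in A, #|e| == 2] && [forall x, #|[set e in A | x \in e]| == 1].

Definition mact (sigma : {perm T}) (A : {set {set T}}) : {set {set T}} :=
  [set [set sigma x | x in e] | e : {set T} in A].

Definition ugraph (A B : {set {set T}}) : rel T :=
  fun x y => (x != y) && [exists e in A :|: B, (x \in e) && (y \in e)].

Definition ucomp (A B : {set {set T}}) (x : T) : {set T} :=
  [set y | connect (ugraph A B) x y].

Definition comps (A B : {set {set T}}) : {set {set T}} :=
  [set ucomp A B x | x in T].

(* d(A,B), as the (unordered) list of its parts: the numbers of vertices of
   the components of A ∪ B; multisets are compared with perm_eq *)
Definition parts (A B : {set {set T}}) : seq nat :=
  map (fun C : {set T} => #|C|) (enum (comps A B)).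

End Matchings.

(* J = {[1,2],[3,4],...,[2n-1,2n]} : 0-based vertices x,y are J-matched iff x/2 = y/2 *)
Definition Jm (n : nat) : {set {set 'I_(2*n)}} :=
  [set [set y : 'I_(2*n) | y./2 == x./2] | x : 'I_(2*n)].

From mathcomp Require Import all_boot fingroup perm zify.
Set Implicit Arguments. Unset Strict Implicit. Unset Printing Implicit Defensive.

(* A perfect matching is a fixed-point-free involution (the partner function),
   and the components of J ∪ A are the alternating cycles of the two partner
   functions.  Relabelling A by the transposition (u v) replaces the A-edges at
   u and v by the edges joining each of u, v to the former partner of the
   other.  If u and v lie on different cycles, this splices the two cycles into
   one.  If they lie on the same cycle at positions of the same parity, the
   cycle splits into two arcs whose lengths are read off from the positions;
   otherwise the arc between them is traversed backwards and the vertex set is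
   unchanged.  In each case the new component of 2n-1 is identified as a set
   closed under both involutions and connected by the new edges, while every
   component avoiding u and v is untouched. *)

Lemma perm_rem (T : eqType) (x : T) (s t : seq T) :
  perm_eq s t -> perm_eq (rem x s) (rem x t).
Proof. by move=> st; apply/seq.permP => P; rewrite !count_rem (perm_mem st) (seq.permP st). Qed.

Section AlternatingComponents.
Variable T : finType.
Implicit Types (f g h : T -> T) (x y : T) (S : {set T}).

Definition altrel f g : rel T := fun x y => (y == f x) || (y == g x).

Definition acomp f g x : {set T} := [set y | connect (altrel f g) x y].

Definition acomps f g : {set {set T}} := [set acomp f g x | x in T].

Definition sizes (K : {set {set T}}) : seq nat := map (fun C : {set T} => #|C|) (enum K).

Lemma acomp_id f g x : x \in acomp f g x.
Proof. by rewrite inE connect0. Qed.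

Lemma acomp_connect f g x y z :
  y \in acomp f g x -> connect (altrel f g) y z -> z \in acomp f g x.
Proof. by rewrite !inE; apply: connect_trans. Qed.

Lemma acomp_f f g x y : y \in acomp f g x -> f y \in acomp f g x.
Proof. by move/acomp_connect; apply; apply: connect1; rewrite /altrel eqxx. Qed.

Lemma acomp_g f g x y : y \in acomp f g x -> g y \in acomp f g x.
Proof. by move/acomp_connect; apply; apply: connect1; rewrite /altrel eqxx orbT. Qed.

Lemma acomp_min f g S x : x \in S ->
  (forall y, y \in S -> f y \in S) -> (forall y, y \in S -> g y \in S) ->
  acomp f g x \subset S.
Proof.
move=> xS fS gS; apply/subsetP=> y; rewrite inE => /connectP [p pth ->] {y}.
elim: p x xS pth => //= z p IH x xS /andP [/orP [] /eqP -> pth].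
  by apply: IH pth; apply: fS.
by apply: IH pth; apply: gS.
Qed.

Lemma acomp_local f g g' x :
  {in acomp f g x, g' =1 g} -> acomp f g' x = acomp f g x.
Proof.
move=> gg'; have sub : acomp f g' x \subset acomp f g x.
  by apply: acomp_min (acomp_id _ _ _) _ _ => [y /acomp_f | y /[dup] /gg' ->/acomp_g].
apply/eqP; rewrite eqEsubset sub.
apply: acomp_min (acomp_id _ _ _) _ _ => [y /acomp_f // | y yx].
by rewrite -gg' ?acomp_g // (subsetP sub).
Qed.

Lemma sizes_setU (K K' : {set {set T}}) : [disjoint K & K'] ->
  perm_eq (sizes (K :|: K')) (sizes K ++ sizes K').
Proof.
move=> KK'; rewrite /sizes -map_cat; apply: perm_map.
apply: perm_trans (enum_setU K K') _; rewrite undup_id // cat_uniq !enum_uniq andbT /=.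
apply/hasPn => C; rewrite !mem_enum => CK'; apply: contraL KK' => CK.
by apply/pred0Pn; exists C; rewrite /= CK.
Qed.

Lemma sizes_set2 (C D : {set T}) : C != D -> perm_eq (sizes [set C; D]) [:: #|C|; #|D|].
Proof.
move=> CD; apply: perm_trans (sizes_setU _) _; first by rewrite disjoints1 inE.
by rewrite /sizes !enum_set1.
Qed.
Section Involutions.
Variables f g : T -> T.
Hypotheses (f_inv : involutive f) (g_inv : involutive g).

Lemma altrel_sym : symmetric (altrel f g).
Proof.
have E h : involutive h -> forall x y, (y == h x) = (x == h y).
  by move=> hK x y; apply/eqP/eqP => ->.
by move=> x y; rewrite /altrel (E f) // (E g).
Qed.

Lemma acomp_sym x y : (y \in acomp f g x) = (x \in acomp f g y).
Proof. by rewrite !inE (sym_connect_sym altrel_sym). Qed.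

Lemma acomp_eq x y : y \in acomp f g x -> acomp f g y = acomp f g x.
Proof.
move=> yx; apply/setP=> z; apply/idP/idP => [|zx]; first by rewrite inE; apply: acomp_connect.
by rewrite acomp_sym in yx; rewrite inE; apply: connect_trans (_ : connect _ y x) _; rewrite -?inE.
Qed.

Lemma imset_acomp x : [set acomp f g y | y in acomp f g x] = [set acomp f g x].
Proof.
apply/setP=> Z; rewrite inE; apply/imsetP/eqP => [[y /acomp_eq -> //]|->].
by exists x; rewrite ?acomp_id.
Qed.

Lemma acomps_local g' S : {in S, forall x, acomp f g x \subset S} -> {in ~: S, g' =1 g} ->
  acomps f g' = [set acomp f g' x | x in S] :|: [set C in acomps f g | [disjoint C & S]].
Proof.
move=> closedS gg'.
have outS x y : x \notin S -> y \in acomp f g x -> y \notin S.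
  move=> + yx; apply: contraNN => yS.
  by apply: (subsetP (closedS y yS)); rewrite -acomp_sym.
have same x : x \notin S -> acomp f g' x = acomp f g x.
  by move=> xS; apply: acomp_local => y /(outS _ _ xS) yS; apply: gg'; rewrite inE.
have disjS x : [disjoint acomp f g x & S] = (x \notin S).
  apply/idP/idP => [|xS].
    by apply: contraL => xS; apply/pred0Pn; exists x; rewrite /= acomp_id.
  by rewrite disjoint_subset; apply/subsetP => y /(outS _ _ xS); rewrite inE.
apply/setP=> Z; rewrite !inE; apply/imsetP/orP => [[x _ ->]|[/imsetP [x xS ->]|]].
- case: (boolP (x \in S)) => xS; first by left; apply/imsetP; exists x.
  by right; rewrite same // disjS xS andbT; apply/imsetP; exists x.
- by exists x.
- case/andP => /imsetP [x _ ->]; rewrite disjS => xS.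
  by exists x; rewrite ?same.
Qed.

Lemma acompU_closed a b :
  {in acomp f g a :|: acomp f g b, forall x, acomp f g x \subset acomp f g a :|: acomp f g b}.
Proof. by move=> x; rewrite in_setU => /orP [] /acomp_eq ->; rewrite ?subsetUl ?subsetUr. Qed.

Lemma acomp_closed a : {in acomp f g a, forall x, acomp f g x \subset acomp f g a}.
Proof. by move=> x /acomp_eq ->. Qed.

Lemma acomp_disjoint x y : x \notin acomp f g y -> [disjoint acomp f g x & acomp f g y].
Proof.
move=> xy; apply/pred0P => z /=; apply/negP => /andP [zx zy].
by move: xy; rewrite -(acomp_eq zy) (acomp_eq zx) acomp_id.
Qed.

Lemma sizes_acomps_local g' S : {in S, forall x, acomp f g x \subset S} ->
  {in ~: S, g' =1 g} ->
  perm_eq (sizes (acomps f g'))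
    (sizes [set acomp f g' x | x in S] ++ sizes [set C in acomps f g | [disjoint C & S]]).
Proof.
move=> closedS gg'; rewrite (acomps_local closedS gg'); apply: sizes_setU.
apply/pred0P => Z /=; apply/negP => /andP [/imsetP [x xS ->]].
rewrite inE => /andP [_] /pred0P /(_ x) /=.
by rewrite acomp_id xS.
Qed.

End Involutions.

End AlternatingComponents.

Section Relabel.
Variable T : finType.
Implicit Types (h : T -> T) (u v y : T) (S : {set T}).

Definition relabel (s : {perm T}) h : T -> T := fun y => s (h ((s^-1)%g y)).

Lemma relabel_inv s h : involutive h -> involutive (relabel s h).
Proof. by move=> hK y; rewrite /relabel permK hK permKV. Qed.

Lemma relabel_tpermE u v h y : relabel (tperm u v) h y = tperm u v (h (tperm u v y)).
Proof. by rewrite /relabel tpermV. Qed.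

Lemma relabel_out u v h y : y != u -> y != v -> h y != u -> h y != v ->
  relabel (tperm u v) h y = h y.
Proof. by move=> yu yv hyu hyv; rewrite relabel_tpermE !tpermD // eq_sym. Qed.

Lemma relabel_closed u v h S : u \in S -> v \in S -> (forall y, y \in S -> h y \in S) ->
  forall y, y \in S -> relabel (tperm u v) h y \in S.
Proof.
have tS y : y \in S -> u \in S -> v \in S -> tperm u v y \in S.
  by move=> yS uS vS; case: tpermP => // ->.
by move=> uS vS hS y yS; rewrite relabel_tpermE tS ?hS ?tS.
Qed.

Lemma relabel_outside u v h S : involutive h -> u \in S -> v \in S ->
  (forall y, y \in S -> h y \in S) -> {in ~: S, relabel (tperm u v) h =1 h}.
Proof.
move=> hK uS vS hS y; rewrite inE => yS.
have hyS : h y \notin S by apply: contra yS => /hS; rewrite hK.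
have neqS z w : z \notin S -> w \in S -> z != w by move=> zS wS; apply: contraNneq zS => ->.
by apply: relabel_out; apply: neqS.
Qed.

Lemma relabel_partner u h : involutive h -> relabel (tperm u (h u)) h =1 h.
Proof.
move=> hK y; rewrite relabel_tpermE; case: (tpermP u (h u) y) => [->|->|yu yhu].
- by rewrite hK tpermL.
- by rewrite tpermR hK.
rewrite tpermD //; apply/eqP.
  by move=> E; apply: yhu; rewrite E hK.
by move/(inv_inj hK)/esym.
Qed.

Lemma acomp_relabel_sub f g u v x y :
  u \in acomp f g x -> v \in acomp f g x -> y \in acomp f g x ->
  acomp f (relabel (tperm u v) g) y \subset acomp f g x.
Proof.
move=> ux vx yx; apply: acomp_min yx (@acomp_f _ f g x) _.
exact: relabel_closed ux vx (@acomp_g _ f g x).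
Qed.

End Relabel.

Section AlternatingCycles.
Variable T : finType.
Implicit Types (f g : T -> T) (c : nat -> T) (r : rel T).

Definition segment c a b : {set T} := [set x in map c (index_iota a b)].

Lemma segmentP c a b y : reflect (exists2 i, a <= i < b & y = c i) (y \in segment c a b).
Proof.
rewrite inE; apply: (iffP mapP) => [] [i]; rewrite ?mem_index_iota => ? ->;
  by exists i; rewrite ?mem_index_iota.
Qed.

Lemma mem_segment c a b i : a <= i < b -> c i \in segment c a b.
Proof. by move=> ?; apply/segmentP; exists i. Qed.

Lemma card_segment c a b : {in [pred i | a <= i < b] &, injective c} ->
  #|segment c a b| = b - a.
Proof.
move=> c_inj; rewrite cardsE; have /card_uniqP -> : uniq (map c (index_iota a b)).
  by rewrite map_inj_in_uniq ?iota_uniq // => i k; rewrite !mem_index_iota; apply: c_inj.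
by rewrite size_map size_iota.
Qed.

Lemma connect_chain r c a b : a <= b -> (forall i, a <= i < b -> r (c i) (c i.+1)) ->
  connect r (c a) (c b).
Proof.
elim: b => [|b IH]; first by rewrite leqn0 => /eqP ->.
rewrite leq_eqVlt => /orP [/eqP -> //|ab] step.
apply: connect_trans (connect1 (step b _)); last by rewrite -ltnS ab /=.
by apply: IH => [|i ?]; [|apply: step]; lia.
Qed.

(* [c 0, ..., c (2m-1)] is an alternating cycle whose f-edges leave the even
   positions; [c (2m) = c 0] closes it up. *)
Definition alt_cycle f g m c :=
  [/\ c (2 * m) = c 0, {in gtn (2 * m) &, injective c}
    & forall i, i < 2 * m -> c i.+1 = (if odd i then g else f) (c i)].

End AlternatingCycles.

Section OnCycle.
Variables (T : finType) (f g : T -> T) (m : nat) (c : nat -> T).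
Hypotheses (f_inv : involutive f) (g_inv : involutive g) (cyc : alt_cycle f g m c).

Lemma alt_cycle_next i : i < 2 * m -> (if odd i then g else f) (c i) = c i.+1.
Proof. by case: cyc => _ _ step im; rewrite step. Qed.

Lemma alt_cycle_eq i k : i < 2 * m -> k < 2 * m -> (c i == c k) = (i == k).
Proof.
case: cyc => _ c_inj _ im km; apply/eqP/eqP => [|-> //].
by move/c_inj; apply; rewrite inE.
Qed.

Lemma alt_cycle_neq i k : i <= 2 * m -> k < 2 * m -> i != k -> (i == 2 * m) ==> (0 < k) ->
  c i != c k.
Proof.
case: cyc => c2m _ _ im km ik; have [->|i_lt] := eqVneq i (2 * m).
  by rewrite c2m alt_cycle_eq //; lia.
by rewrite alt_cycle_eq //; lia.
Qed.

Lemma alt_cycle_rel i : i < 2 * m -> altrel f g (c i) (c i.+1).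
Proof. by move=> im; rewrite /altrel -alt_cycle_next //; case: ifP; rewrite eqxx ?orbT. Qed.

Lemma alt_cycle_prev i : 0 < i <= 2 * m -> (if odd i then f else g) (c i) = c i.-1.
Proof.
case: i => // i /= im; rewrite -alt_cycle_next; last lia.
by case: (odd i); rewrite /= ?f_inv ?g_inv.
Qed.

Lemma alt_cycle_closed y : y \in segment c 0 (2 * m) ->
  f y \in segment c 0 (2 * m) /\ g y \in segment c 0 (2 * m).
Proof.
case: cyc => c2m _ _ /segmentP [i /andP [_ im] ->].
have seg k : k <= 2 * m -> c k \in segment c 0 (2 * m).
  rewrite leq_eqVlt => /orP [/eqP ->|km]; last by rewrite mem_segment.
  by rewrite c2m mem_segment //; lia.
have next := alt_cycle_next im; have [i_odd|i_even] := boolP (odd i).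
  have prev := @alt_cycle_prev i; rewrite i_odd in next prev.
  by rewrite prev ?next ?seg; lia.
rewrite (negbTE i_even) in next; rewrite next seg; last lia; split=> //.
case: (posnP i) => [i0|i0]; last first.
  by have := @alt_cycle_prev i; rewrite (negbTE i_even) => ->; rewrite ?seg; lia.
have := @alt_cycle_prev (2 * m); rewrite i0 -c2m oddM /= => ->; rewrite ?seg; lia.
Qed.

Lemma alt_cycle_acomp i : i < 2 * m -> acomp f g (c i) = segment c 0 (2 * m).
Proof.
move=> im; have c0i : c i \in acomp f g (c 0).
  by rewrite inE; apply: connect_chain => // k /andP [_ km]; apply: alt_cycle_rel; lia.
rewrite (acomp_eq f_inv g_inv c0i); apply/eqP; rewrite eqEsubset; apply/andP; split.
  apply: acomp_min; first by rewrite mem_segment //; lia.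
    by move=> y /alt_cycle_closed [].
  by move=> y /alt_cycle_closed [].
apply/subsetP => y /segmentP [k /andP [_ km] ->]; rewrite inE.
by apply: connect_chain => // l /andP [_ lk]; apply: alt_cycle_rel; lia.
Qed.

Lemma alt_cycle_mem i k : i < 2 * m -> k < 2 * m -> c k \in acomp f g (c i).
Proof. by move=> im km; rewrite alt_cycle_acomp // mem_segment. Qed.

Lemma connect_relabel_arc u v a b : a <= b <= 2 * m ->
  (forall k, a <= k < b -> odd k -> [/\ c k != u, c k != v, c k.+1 != u & c k.+1 != v]) ->
  connect (altrel f (relabel (tperm u v) g)) (c a) (c b).
Proof.
move=> /andP [ab bm] avoid; apply: connect_chain ab _ => k /andP [ak kb].
have km : k < 2 * m by lia.
rewrite /altrel; have := alt_cycle_next km; case: ifP => [k_odd gk|_ <-]; last by rewrite eqxx.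
have [cku ckv cku' ckv'] := avoid k (introT andP (conj ak kb)) k_odd.
by rewrite relabel_out ?gk ?eqxx ?orbT.
Qed.

End OnCycle.

Section Orbits.
Variables (T : finType) (f g : T -> T).
Hypotheses (f_inv : involutive f) (g_inv : involutive g).
Hypotheses (f_neq : forall x, f x != x) (g_neq : forall x, g x != x).
Local Notation p := (g \o f).

Lemma gf_inj : injective p.
Proof. exact: inj_comp (inv_inj g_inv) (inv_inj f_inv). Qed.

Lemma iter_gf_inj s : injective (iter s p).
Proof. by elim: s => // s IH x y /= /gf_inj /IH. Qed.

Lemma iter_gf_f s y : iter s p (f (iter s p y)) = f y.
Proof. by elim: s => // s IH; rewrite iterSr iterS /= f_inv g_inv. Qed.

(* As [f] conjugates [p] into its inverse, [iter d p y = f y] would produce a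
   fixed point of [f] (d even) or of [g] (d odd). *)
Lemma iter_gf_neq_f d y : iter d p y != f y.
Proof.
apply/eqP => E; have := iter_gf_f d./2 y; rewrite -E.
have [d_odd|d_even] := boolP (odd d).
  rewrite -[in iter d _ _](_ : d./2 + d./2.+1 = d); last lia.
  rewrite iterD iterS => /iter_gf_inj /eqP.
  by rewrite eq_sym (negbTE (g_neq _)).
rewrite -[in iter d _ _](_ : d./2 + d./2 = d); last lia.
by rewrite iterD => /iter_gf_inj /eqP; rewrite (negbTE (f_neq _)).
Qed.

Lemma iter_gf_neq_f_iter a b x : iter a p x != f (iter b p x).
Proof.
case: (leqP b a) => ab; first by rewrite -(subnK ab) iterD iter_gf_neq_f.
rewrite eq_sym (can2_eq f_inv f_inv) -(subnK (ltnW ab)) iterD.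
exact: iter_gf_neq_f.
Qed.

Definition orbit_cycle x i := (if odd i then f else id) (iter i./2 p x).

Lemma alt_cycle_orbit x : alt_cycle f g (fingraph.order p x) (orbit_cycle x).
Proof.
rewrite /orbit_cycle; split.
- by rewrite oddM mul2n doubleK /= (iter_order gf_inj).
- move=> i k; rewrite !inE => im km.
  case: (boolP (odd i)) => i_odd; case: (boolP (odd k)) => k_odd /=.
  + move/(inv_inj f_inv)/(congr1 (findex p x)); rewrite !findex_iter; lia.
  + by move/eqP; rewrite eq_sym (negbTE (iter_gf_neq_f_iter _ _ _)).
  + by move/eqP; rewrite (negbTE (iter_gf_neq_f_iter _ _ _)).
  + move/(congr1 (findex p x)); rewrite !findex_iter; lia.
- move=> i im; have [i_odd|i_even] := boolP (odd i).
    have -> : odd i.+1 = false by lia.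
    by have -> : i.+1./2 = i./2.+1 by lia.
  have -> : odd i.+1 = true by lia.
  by have -> : i.+1./2 = i./2 by lia.
Qed.

End Orbits.

Section CycleOfPath.
Variables (T : finType) (f g : T -> T).
Hypotheses (f_inv : involutive f) (g_inv : involutive g).

Lemma cycle_nth_rel (r : rel T) x s i : path.cycle r (x :: s) -> i < size (x :: s) ->
  r (nth x (x :: s) i) (nth x (x :: s) i.+1).
Proof.
move=> /(pathP x) rs i_lt; have := rs i; rewrite size_rcons -rcons_cons.
by rewrite !nth_rcons_default; apply.
Qed.

Lemma alt_cycle_of_cycle x s m : size (x :: s) = 2 * m -> 1 < m -> uniq (x :: s) ->
  path.cycle (altrel f g) (x :: s) -> nth x s 0 = f x -> alt_cycle f g m (nth x (x :: s)).
Proof.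
move=> size_xs m_gt1 uniq_xs cyc_xs c1; set c := nth x (x :: s).
have c_eq i k : i < 2 * m -> k < 2 * m -> (c i == c k) = (i == k).
  by move=> im km; rewrite nth_uniq // size_xs.
have c2m : c (2 * m) = c 0 by rewrite /c -size_xs nth_default.
split=> //; first by move=> i k; rewrite !inE => im km /eqP; rewrite c_eq // => /eqP.
elim=> [//|i IH] im.
have rel := cycle_nth_rel cyc_xs (_ : i.+1 < size (x :: s)).
move: rel; rewrite size_xs => /(_ im); rewrite -/c /altrel.
have back : (if odd i then g else f) (c i.+1) = c i.
  by rewrite IH; [case: odd | lia].
have neq : c i.+2 != c i.
  have [i2m|i2m] := ltnP i.+2 (2 * m); first by rewrite c_eq //; lia.
  have -> : i.+2 = 2 * m by lia.
  by rewrite c2m c_eq //; lia.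
by rewrite /=; case: (odd i) back => /= ->; rewrite (negbTE neq) ?orbF => /eqP.
Qed.
End CycleOfPath.

Section Switches.
Variables (T : finType) (f g : T -> T).
Hypotheses (f_inv : involutive f) (g_inv : involutive g).
Hypotheses (f_neq : forall x, f x != x) (g_neq : forall x, g x != x).

Lemma alt_cycle_through v :
  exists m c, [/\ alt_cycle f g m c, c 0 = f v, c 1 = v & 0 < m].
Proof.
exists (fingraph.order (g \o f) (f v)), (orbit_cycle f g (f v)); split.
- exact: alt_cycle_orbit.
- by [].
- by rewrite /orbit_cycle /= f_inv.
- exact: fingraph.order_gt0.
Qed.

Lemma alt_cycle_ending s :
  exists m c, [/\ alt_cycle f g m c, c 0 = g s, c (2 * m).-1 = s & 0 < m].
Proof.
have cyc := alt_cycle_orbit f_inv g_inv f_neq g_neq (g s).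
set m := fingraph.order _ _ in cyc; set c := orbit_cycle _ _ _ in cyc.
have m_gt0 : 0 < m := fingraph.order_gt0 _ _.
exists m, c; split=> //; have [c2m _ _] := cyc.
have := alt_cycle_prev f_inv g_inv cyc (_ : 0 < 2 * m <= 2 * m).
by rewrite oddM /= c2m /c /orbit_cycle /= g_inv => <- //; lia.
Qed.

Lemma acomp_merge v s : s \notin acomp f g v ->
  acomp f (relabel (tperm s v) g) v = acomp f g s :|: acomp f g v.
Proof.
move=> sv; have vs : v \notin acomp f g s by rewrite acomp_sym.
set g' := relabel (tperm s v) g; set S := _ :|: _.
have [mt [ct [ct_cyc ct0 ct1 mt0]]] := alt_cycle_through v.
have [ms [cs [cs_cyc cs0 cs_last ms0]]] := alt_cycle_ending s.
have Ct : acomp f g v = segment ct 0 (2 * mt).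
  by rewrite -{1}ct1 (alt_cycle_acomp f_inv g_inv ct_cyc) //; lia.
have Cs : acomp f g s = segment cs 0 (2 * ms).
  by rewrite -{1}cs_last (alt_cycle_acomp f_inv g_inv cs_cyc) //; lia.
have neq z y w : y \in acomp f g z -> w \notin acomp f g z -> y != w.
  by move=> yz; apply: contraNneq => <-.
apply/eqP; rewrite eqEsubset; apply/andP; split.
  have gS y : y \in S -> g y \in S by rewrite !in_setU => /orP [] /acomp_g ->; rewrite ?orbT.
  have fS y : y \in S -> f y \in S by rewrite !in_setU => /orP [] /acomp_f ->; rewrite ?orbT.
  have [sS vS] : s \in S /\ v \in S by rewrite !in_setU !acomp_id orbT.
  exact: acomp_min vS fS (relabel_closed sS vS gS).
have to_cs i : i < 2 * ms -> connect (altrel f g') v (cs i).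
  move=> im; apply: connect_trans (connect1 (_ : altrel f g' v (cs 0))) _.
    rewrite /altrel /g' relabel_tpermE tpermR tpermD ?cs0 ?eqxx ?orbT // 1?eq_sym ?g_neq //.
    by apply: neq vs; rewrite acomp_g ?acomp_id.
  apply: (connect_relabel_arc cs_cyc) => [|k kb k_odd]; first lia.
  have csS l : l < 2 * ms -> cs l \in acomp f g s by move=> lm; rewrite Cs mem_segment.
  by split; try (apply: (neq s _ _ (csS _ _) vs); lia); rewrite -cs_last (alt_cycle_eq cs_cyc); lia.
have to_ct i : 2 <= i < 2 * mt -> connect (altrel f g') v (ct i).
  move=> im; apply: connect_trans (to_cs (2 * ms).-1 _) _; first lia.
  rewrite cs_last; apply: connect_trans (connect1 (_ : altrel f g' s (ct 2))) _.
    have := alt_cycle_next ct_cyc (_ : 1 < 2 * mt); rewrite /= ct1 => <-; last lia.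
    rewrite /altrel /g' relabel_tpermE tpermL tpermD ?eqxx ?orbT // 1?eq_sym ?g_neq //.
    by apply: neq sv; rewrite acomp_g ?acomp_id.
  apply: (connect_relabel_arc ct_cyc) => [|k kb k_odd]; first lia.
  have ctS l : l < 2 * mt -> ct l \in acomp f g v by move=> lm; rewrite Ct mem_segment.
  by split; try (apply: (neq v _ _ (ctS _ _) sv); lia); rewrite -ct1 (alt_cycle_eq ct_cyc); lia.
apply/subsetP => y; rewrite in_setU Cs Ct => /orP [] /segmentP [i /andP [_ im] ->]; rewrite inE.
  exact: to_cs.
case: i im => [|[|i]] im; last by apply: to_ct; lia.
  by apply: connect1; rewrite /altrel ct0 eqxx.
by rewrite ct1 connect0.
Qed.

Lemma sizes_merge v s : s \notin acomp f g v ->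
  let g' := relabel (tperm s v) g in
  perm_eq (sizes (acomps f g'))
    ((#|acomp f g s| + #|acomp f g v|)
       :: rem #|acomp f g s| (rem #|acomp f g v| (sizes (acomps f g))))
  /\ #|acomp f g' v| = #|acomp f g s| + #|acomp f g v|.
Proof.
move=> sv g'; set S := acomp f g s :|: acomp f g v.
have merged : acomp f g' v = S by apply: acomp_merge.
have closedS := acompU_closed f_inv g_inv (a := s) (b := v).
have gS y : y \in S -> g y \in S by move=> /closedS/subsetP; apply; rewrite acomp_g ?acomp_id.
have [sS vS] : s \in S /\ v \in S by rewrite !in_setU !acomp_id orbT.
have new := sizes_acomps_local f_inv g_inv closedS (relabel_outside g_inv sS vS gS).
have old := sizes_acomps_local f_inv g_inv closedS (g' := g) (fun _ _ => erefl).
have cardS : #|S| = #|acomp f g s| + #|acomp f g v|.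
  by rewrite cardsU (disjoint_setI0 (acomp_disjoint f_inv g_inv sv)) cards0 subn0.
have im_new : [set acomp f g' x | x in S] = [set S].
  by rewrite -merged imset_acomp //; exact: relabel_inv.
have im_old : [set acomp f g x | x in S] = [set acomp f g s; acomp f g v].
  by rewrite imsetU !imset_acomp.
have sv' : acomp f g s != acomp f g v by apply: contraNneq sv => <-; rewrite acomp_id.
rewrite merged cardS; split=> //; apply: perm_trans new _.
rewrite im_new /sizes enum_set1 /= cardS perm_cons.
rewrite perm_sym; apply: perm_trans (perm_rem _ (perm_rem _ old)) _.
have old2 := perm_cat (sizes_set2 sv') (perm_refl (sizes [set C in acomps f g | [disjoint C & S]])).
rewrite im_old; apply: perm_trans (perm_rem _ (perm_rem _ old2)) _.
by rewrite /= eqxx; case: eqP => [->|_]; rewrite /= eqxx.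
Qed.

End Switches.

Section CycleSwitches.
Variables (T : finType) (f g : T -> T) (m : nat) (c : nat -> T).
Hypotheses (f_inv : involutive f) (g_inv : involutive g) (cyc : alt_cycle f g m c).

Lemma alt_cycle_split_arc j : 0 < j < m ->
  alt_cycle f (relabel (tperm (c (2 * j).+1) (c 1)) g) j
    (fun i => if i < 2 * j then c (i + 2) else c 2).
Proof.
move=> j_bounds; have ne := alt_cycle_neq cyc; split.
- by rewrite ltnn ifT //; lia.
- move=> i k; rewrite !inE => ij kj; rewrite ij kj => /eqP.
  by rewrite (alt_cycle_eq cyc); lia.
move=> i ij; rewrite ij.
have next : (if odd i then g else f) (c (i + 2)) = c (i + 2).+1.
  have -> : odd i = odd (i + 2) by lia.
  by rewrite (alt_cycle_next cyc) //; lia.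
case: ltnP => [i1j|i1j].
  rewrite addSn -next; case: ifP => // i_odd; rewrite i_odd in next.
  by rewrite relabel_out ?next ?ne //; lia.
have [-> i_odd] : i + 2 = (2 * j).+1 /\ odd i by split; lia.
have g1 : g (c 1) = c 2 by rewrite -(alt_cycle_next cyc (i := 1)) //=; lia.
by rewrite i_odd relabel_tpermE tpermL g1 tpermD // ne //; lia.
Qed.

Lemma acomp_split j : 0 < j < m ->
  let g' := relabel (tperm (c (2 * j).+1) (c 1)) g in
  [/\ acomp f g (c 1) = acomp f g' (c 1) :|: acomp f g' (c 2),
      c 1 \notin acomp f g' (c 2) & #|acomp f g' (c 2)| = 2 * j].
Proof.
move=> jb g'; have g'_inv : involutive g' := relabel_inv _ g_inv.
have ne := alt_cycle_neq cyc; have arc := alt_cycle_split_arc jb.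
set d := fun i => _ in arc; have [_ d_inj _] := arc.
have K2 : acomp f g' (c 2) = segment d 0 (2 * j).
  have d0 : d 0 = c 2 by rewrite /d ifT //; lia.
  by rewrite -d0 (alt_cycle_acomp f_inv g'_inv arc) //; lia.
have Ct : acomp f g (c 1) = segment c 0 (2 * m).
  by rewrite (alt_cycle_acomp f_inv g_inv cyc) //; lia.
split; last first.
- by rewrite K2 card_segment ?subn0.
- apply/negP; rewrite K2 => /segmentP [i /andP [_ ij]]; rewrite /d ij; apply/eqP/ne; lia.
apply/eqP; rewrite eqEsubset subUset; apply/andP; split; last first.
  by rewrite !acomp_relabel_sub ?(alt_cycle_mem f_inv g_inv cyc); lia.
rewrite {1}Ct; apply/subsetP => _ /segmentP [i /andP [_ im] ->]; rewrite in_setU.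
have [/andP [i2 ij]|out] := boolP (2 <= i < (2 * j).+2).
  apply/orP; right; rewrite K2; apply/segmentP; exists (i - 2); first lia.
  by rewrite /d ifT ?subnK //; lia.
apply/orP; left; rewrite inE; case: i im out => [|[|i]] im out; rewrite ?connect0 //.
  by apply: connect1; rewrite /altrel -(alt_cycle_prev f_inv g_inv cyc (i := 1)) ?eqxx.
have g'1 : g' (c 1) = c (2 * j).+2.
  have gu : g (c (2 * j).+1) = c (2 * j).+2.
    by rewrite -(alt_cycle_next cyc (i := (2 * j).+1)) ?ifT //; lia.
  by rewrite /g' relabel_tpermE tpermR gu tpermD // ne //; lia.
apply: connect_trans (connect1 (_ : altrel f g' (c 1) (c (2 * j).+2))) _.
  by rewrite /altrel g'1 eqxx orbT.
by apply: (connect_relabel_arc cyc) => [|k kb k_odd]; [lia | split; apply: ne; lia].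
Qed.

Lemma acomp_flip j : 0 < j < m ->
  acomp f (relabel (tperm (c (2 * j)) (c 1)) g) (c 1) = acomp f g (c 1).
Proof.
move=> jb; set g' := relabel _ g; have ne := alt_cycle_neq cyc.
have g2 : g (c 2) = c 1 by rewrite -(alt_cycle_prev f_inv g_inv cyc (i := 2)) //; lia.
(* For [j = 1] the transposition swaps the ends of a [g]-edge: [g] is unchanged. *)
have [j1|j_gt1] := eqVneq j 1.
  by apply: acomp_local => y _; rewrite /g' j1 -g2 relabel_partner.
apply/eqP; rewrite eqEsubset; apply/andP; split.
  by rewrite acomp_relabel_sub ?acomp_id ?(alt_cycle_mem f_inv g_inv cyc); lia.
have sym := sym_connect_sym (altrel_sym f_inv (relabel_inv (tperm (c (2 * j)) (c 1)) g_inv)).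
have link k l : g' (c k) = c l -> connect (altrel f g') (c k) (c l).
  by move=> E; apply: connect1; rewrite /altrel E eqxx orbT.
have to_mid : connect (altrel f g') (c 1) (c (2 * j).-1).
  have g2j : g (c (2 * j)) = c (2 * j).-1.
    by rewrite -(alt_cycle_prev f_inv g_inv cyc (i := 2 * j)) ?ifF //; lia.
  by apply: link; rewrite /g' relabel_tpermE tpermR g2j tpermD ?ne //; lia.
have to_2j : connect (altrel f g') (c (2 * j).-1) (c (2 * j)).
  apply: connect_trans (link 2 (2 * j) _).
    rewrite sym; apply: (connect_relabel_arc cyc) => [|k kb k_odd]; first lia.
    by split; apply: ne; lia.
  by rewrite /g' relabel_tpermE [tperm _ _ (c 2)]tpermD ?ne ?g2 ?tpermR //; lia.
rewrite (alt_cycle_acomp f_inv g_inv cyc); last lia.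
apply/subsetP => _ /segmentP [i /andP [_ im] ->]; rewrite inE.
case: i im => [|[|i]] im; rewrite ?connect0 //.
  by apply: connect1; rewrite /altrel -(alt_cycle_prev f_inv g_inv cyc (i := 1)) ?eqxx.
apply: connect_trans to_mid _; case: (ltnP i.+2 (2 * j)) => i2j.
  by rewrite sym; apply: (connect_relabel_arc cyc) => [|k kb k_odd]; [lia | split; apply: ne; lia].
apply: connect_trans to_2j _.
by apply: (connect_relabel_arc cyc) => [|k kb k_odd]; [lia | split; apply: ne; lia].
Qed.

Lemma sizes_split j : 0 < j < m ->
  let g' := relabel (tperm (c (2 * j).+1) (c 1)) g in
  perm_eq (sizes (acomps f g'))
    ((#|acomp f g (c 1)| - 2 * j) :: 2 * j :: rem #|acomp f g (c 1)| (sizes (acomps f g)))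
  /\ #|acomp f g' (c 1)| = #|acomp f g (c 1)| - 2 * j.
Proof.
move=> jb g'; have [cover c1K2 cardK2] := acomp_split jb.
have g'_inv : involutive g' := relabel_inv _ g_inv.
set S := acomp f g (c 1) in cover *.
have closedS := acomp_closed f_inv g_inv (a := c 1).
have [uS vS] : c (2 * j).+1 \in S /\ c 1 \in S by rewrite !(alt_cycle_mem f_inv g_inv cyc); lia.
have new := sizes_acomps_local f_inv g_inv closedS
  (relabel_outside g_inv uS vS (@acomp_g _ f g (c 1))).
have old := sizes_acomps_local f_inv g_inv closedS (g' := g) (fun _ _ => erefl).
have K12 : acomp f g' (c 1) != acomp f g' (c 2) by apply: contraNneq c1K2 => <-; rewrite acomp_id.
have cardK1 : #|acomp f g' (c 1)| = #|S| - 2 * j.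
  rewrite cover cardsU (disjoint_setI0 (acomp_disjoint f_inv g'_inv c1K2)) cards0 subn0.
  by rewrite cardK2 addnK.
have im_new : [set acomp f g' x | x in S] = [set acomp f g' (c 1); acomp f g' (c 2)].
  by rewrite cover imsetU !imset_acomp.
split=> //; apply: perm_trans new _; rewrite im_new.
apply: perm_trans (perm_cat (sizes_set2 K12) (perm_refl _)) _.
rewrite cardK1 cardK2 /= !perm_cons perm_sym; apply: perm_trans (perm_rem _ old) _.
by rewrite imset_acomp // /sizes enum_set1 /= eqxx.
Qed.

Lemma acomps_flip j : 0 < j < m ->
  acomps f (relabel (tperm (c (2 * j)) (c 1)) g) = acomps f g.
Proof.
move=> jb; set g' := relabel _ g; set S := acomp f g (c 1).
have closedS := acomp_closed f_inv g_inv (a := c 1).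
have [uS vS] : c (2 * j) \in S /\ c 1 \in S by rewrite !(alt_cycle_mem f_inv g_inv cyc); lia.
have im_new : [set acomp f g' x | x in S] = [set S].
  by rewrite /S -(acomp_flip jb) imset_acomp //; exact: relabel_inv.
rewrite (acomps_local f_inv g_inv closedS (g' := g) (fun _ _ => erefl)) imset_acomp //.
have out := relabel_outside g_inv uS vS (@acomp_g _ f g (c 1)).
by rewrite (acomps_local f_inv g_inv closedS out) im_new.
Qed.
End CycleSwitches.


Section Partners.
Variable T : finType.
Implicit Types (A B : {set {set T}}) (h : T -> T).

Definition matched A : rel T := fun x y => (x != y) && [exists e in A, (x \in e) && (y \in e)].

Definition is_partner A h := forall x y, matched A x y = (y == h x).

Lemma matched_sym A : symmetric (matched A).
Proof.
move=> x y; rewrite /matched eq_sym; congr (_ && _).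
by apply/exists_inP/exists_inP => -[e eA /andP [? ?]]; exists e; rewrite // andbC; apply/andP.
Qed.

Lemma partner_neq A h : is_partner A h -> forall x, h x != x.
Proof. by move=> hA x; have := hA x (h x); rewrite eqxx eq_sym => /andP []. Qed.

Lemma partner_inv A h : is_partner A h -> involutive h.
Proof. by move=> hA x; apply/eqP; rewrite eq_sym -hA matched_sym hA. Qed.

Lemma partner_exists A : (forall x, exists y, matched A x y) ->
  (forall x y z, matched A x y -> matched A x z -> y = z) -> exists h, is_partner A h.
Proof.
move=> total unique; exists (fun x => odflt x [pick y | matched A x y]) => x y.
case: pickP => [z xz|none]; last by have [y' xy'] := total x; rewrite none in xy'.
by apply/idP/eqP => [xy|->]; [apply: unique xy xz | ].
Qed.

Lemma pm_partner A : is_pm A -> exists h, is_partner A h.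
Proof.
case/andP => /forall_inP edge2 /forallP cover1.
have edge_eq x e e' : e \in A -> e' \in A -> x \in e -> x \in e' -> e = e'.
  move=> eA e'A xe xe'; have /cards1P [e0 E] := cover1 x.
  have : e \in [set e in A | x \in e] by rewrite inE eA.
  have : e' \in [set e in A | x \in e] by rewrite inE e'A.
  by rewrite E !inE => /eqP -> /eqP ->.
have other x e : e \in A -> x \in e -> exists2 y, x != y & e = [set x; y].
  move=> eA xe; have /cards2P [a [b [ab Eab]]] := edge2 e eA.
  move: xe; rewrite Eab !inE => /orP [] /eqP ->; first by exists b.
  by exists a; rewrite 1?eq_sym // setUC.
apply: partner_exists => [x|x y z].
  have /cards1P [e Ex] := cover1 x; have : e \in [set e in A | x \in e] by rewrite Ex set11.
  rewrite inE => /andP [eA xe]; have [y xy Ee] := other x e eA xe.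
  by exists y; rewrite /matched xy; apply/exists_inP; exists e; rewrite // Ee !inE !eqxx orbT.
move=> /andP [xy /exists_inP [e eA /andP [xe ye]]] /andP [xz /exists_inP [e' e'A /andP [xe' ze']]].
rewrite -(edge_eq x e e') // in ze'; have [w _ Ee] := other x e eA xe.
move: ye ze'; rewrite Ee !inE ![_ == x]eq_sym (negbTE xy) (negbTE xz) /=.
by move=> /eqP -> /eqP ->.
Qed.

Lemma matched_mact A (s : {perm T}) x y :
  matched (mact s A) x y = matched A ((s^-1)%g x) ((s^-1)%g y).
Proof.
rewrite /matched (can_eq (permK _)); congr (_ && _).
apply/exists_inP/exists_inP => [[_ /imsetP [e eA ->] /andP [/imsetP [a ae ->] /imsetP [b be ->]]]|].
  by exists e; rewrite // !permK ae be.
move=> [e eA /andP [xe ye]]; exists [set s z | z in e]; first by apply/imsetP; exists e.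
by rewrite -[x](permKV s) -[y](permKV s) !imset_f.
Qed.

Lemma partner_mact A h (s : {perm T}) : is_partner A h -> is_partner (mact s A) (relabel s h).
Proof.
by move=> hA x y; rewrite matched_mact hA (can2_eq (permKV s) (permK s)).
Qed.

Lemma ucompC A B : ucomp A B = ucomp B A.
Proof. by rewrite /ucomp /ugraph setUC. Qed.

Lemma partsC A B : parts A B = parts B A.
Proof. by rewrite /parts /comps ucompC. Qed.

Lemma ugraph_altrel A B hA hB : is_partner A hA -> is_partner B hB ->
  ugraph A B =2 altrel hA hB.
Proof.
move=> hAP hBP x y; rewrite /altrel -hAP -hBP /ugraph /matched -andb_orr; congr (_ && _).
apply/exists_inP/orP => [[e /setUP [] eAB xye]|[] /exists_inP [e eAB xye]].
- by left; apply/exists_inP; exists e.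
- by right; apply/exists_inP; exists e.
- by exists e; rewrite // inE eAB.
- by exists e; rewrite // inE eAB orbT.
Qed.

Lemma ucomp_acomp A B hA hB : is_partner A hA -> is_partner B hB ->
  ucomp A B =1 acomp hA hB.
Proof. by move=> hAP hBP x; apply/setP => y; rewrite !inE (eq_connect (ugraph_altrel hAP hBP)). Qed.

Lemma parts_sizes A B hA hB : is_partner A hA -> is_partner B hB ->
  parts A B = sizes (acomps hA hB).
Proof. by move=> hAP hBP; rewrite /parts /comps (eq_imset _ (ucomp_acomp hAP hBP)). Qed.

End Partners.

Lemma Jm_matched n (x y : 'I_(2 * n)) : matched (Jm n) x y = (x != y) && (x./2 == y./2).
Proof.
rewrite /matched; congr (_ && _).
apply/exists_inP/eqP => [[_ /imsetP [z _ ->]]|E]; first by rewrite !inE => /andP [/eqP -> /eqP ->].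
by exists [set w : 'I_(2 * n) | w./2 == x./2]; [apply/imsetP; exists x | rewrite !inE E eqxx].
Qed.

Lemma Jm_partnerE n h (x y : 'I_(2 * n)) : is_partner (Jm n) h ->
  val x != val y -> (val x)./2 = (val y)./2 -> h x = y.
Proof.
move=> hJ xy xy2; apply/eqP; rewrite eq_sym -hJ Jm_matched; apply/andP; split; last exact/eqP.
by apply: contraNneq xy => ->.
Qed.

Lemma Jm_partner n : exists h, is_partner (Jm n) h.
Proof.
have ord_neq (a b : 'I_(2 * n)) : a != b -> nat_of_ord a <> b.
  by move=> /eqP ab E; apply: ab; apply: ord_inj.
apply: partner_exists => [x|x y z]; rewrite ?Jm_matched.
  have lt : x./2 * 2 + (1 - x %% 2) < 2 * n by have := ltn_ord x; lia.
  exists (Ordinal lt); rewrite Jm_matched; apply/andP; split; apply/eqP => /=; last lia.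
  by move=> /(congr1 (@nat_of_ord _)) /=; lia.
move=> /andP [/ord_neq xy /eqP xy2] /andP [/ord_neq xz /eqP xz2]; apply: ord_inj; lia.
Qed.

Unset Implicit Arguments.

Theorem lemma5p4 (n : nat) (pen lst : 'I_(2*n)) (A : {set {set 'I_(2*n)}}) :
  0 < n ->
  val pen = (2*n - 2)%N ->  (* the vertex 2n-1 *)
  val lst = (2*n - 1)%N ->  (* the vertex 2n *)
  is_pm A ->
  (* (i) *)
  (forall s : 'I_(2*n), s \notin ucomp (Jm n) A pen ->
     let A' := mact (tperm s pen) A in
     perm_eq (parts A' (Jm n))
       ((#|ucomp (Jm n) A s| + #|ucomp (Jm n) A pen|)
          :: rem #|ucomp (Jm n) A s| (rem #|ucomp (Jm n) A pen| (parts (Jm n) A)))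
     /\ #|ucomp A' (Jm n) pen| = (#|ucomp (Jm n) A s| + #|ucomp (Jm n) A pen|)%N)
  /\
  (* (ii): 2n, 2n-1, i_1, ..., i_{2k} is a cyclic traversal of C_t *)
  (forall (k : nat) (ii : seq 'I_(2*n)),
     size ii = (2*k)%N ->
     uniq [:: lst, pen & ii] ->
     [set x in [:: lst, pen & ii]] = ucomp (Jm n) A pen ->
     path.cycle (ugraph (Jm n) A) [:: lst, pen & ii] ->
     forall j : nat, 1 <= j <= k ->
       (* (a) with i_{2j} = nth lst ii (2j-1) *)
       (let A' := mact (tperm (nth lst ii (2*j - 1)) pen) A in
        perm_eq (parts A' (Jm n))
          ((#|ucomp (Jm n) A pen| - 2*j) :: (2*j) :: rem #|ucomp (Jm n) A pen| (parts (Jm n) A))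
        /\ #|ucomp A' (Jm n) pen| = (#|ucomp (Jm n) A pen| - 2*j)%N)
       /\
       (* (b) with i_{2j-1} = nth lst ii (2j-2) *)
       (let A' := mact (tperm (nth lst ii (2*j - 2)) pen) A in
        perm_eq (parts A' (Jm n)) (parts (Jm n) A)
        /\ #|ucomp A' (Jm n) pen| = #|ucomp (Jm n) A pen|)).
Proof.
move=> n_gt0 pen_val lst_val A_pm.
have [jp J_jp] := Jm_partner n; have [ap A_ap] := pm_partner A_pm.
have [jp_inv ap_inv] := (partner_inv J_jp, partner_inv A_ap).
have A'_ap u := partner_mact (tperm u pen) A_ap.
have [ucompE partsE] := (ucomp_acomp J_jp A_ap, parts_sizes J_jp A_ap).
have ucompE' u := ucomp_acomp J_jp (A'_ap u); have partsE' u := parts_sizes J_jp (A'_ap u).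
(* The hypothesis that the cycle spans the component of [pen] follows from the others. *)
split=> [s|k ii size_ii uniq_L _ cycle_L j j_bounds].
  rewrite ucompE => s_out A'; rewrite /A' (partsC (mact _ A)) (ucompC (mact _ A)).
  rewrite partsE' ucompE' partsE !ucompE.
  exact: sizes_merge jp_inv ap_inv (partner_neq J_jp) (partner_neq A_ap) _ _ s_out.
have jp_lst : jp lst = pen by apply: Jm_partnerE J_jp _ _; rewrite lst_val pen_val; lia.
set L := [:: lst, pen & ii] in uniq_L cycle_L *.
have cyc : alt_cycle jp ap k.+1 (nth lst L).
  apply: alt_cycle_of_cycle; rewrite ?jp_lst //; try lia.
    by rewrite /= size_ii; lia.
  by rewrite -(eq_cycle (ugraph_altrel J_jp A_ap)).
have -> : nth lst ii (2 * j - 1) = nth lst L (2 * j).+1.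
  by rewrite /L (_ : (2 * j).+1 = (2 * j - 1).+2) //; lia.
have -> : nth lst ii (2 * j - 2) = nth lst L (2 * j).
  by rewrite /L [in RHS](_ : 2 * j = (2 * j - 2).+2) //; lia.
have jb : 0 < j < k.+1 by lia.
split=> A'; rewrite /A' (partsC (mact _ A)) (ucompC (mact _ A)) partsE' ucompE'.
  by rewrite !ucompE partsE; exact: (sizes_split jp_inv ap_inv cyc jb).
by rewrite !ucompE partsE (acomps_flip jp_inv ap_inv cyc jb) (acomp_flip jp_inv ap_inv cyc jb).
Qed.
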